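(* Let $\{m_k:k\ge0\}$ be positive reals with $\sum_k m_k=\infty$ and $m_k\to0$; let $S_0=0$ and $S_{k+1}=\sum_{i=0}^k m_i$. Define functions $f_j:(S_j,S_{j+1}]\to\mathbb{R}$, $j\ge0$, recursively with constants $c_0=0$ and $c_j=f_{j-1}(S_j)$ for $j\ge1$, by $$f_j(x)=\begin{cases}-x+S_j+c_j & x\in(S_j,S_j+\tfrac{m_j}{16})\\ \tfrac{8}{m_j}(x-S_j-\tfrac{m_j}{8})^2-\tfrac{3m_j}{32}+c_j & x\in[S_j+\tfrac{m_j}{16},S_j+\tfrac{3m_j}{16})\\ -\tfrac{5m_j}{16}\exp\!\big(\tfrac{5m_j/16}{x-S_j-m_j/2}+1\big)+\tfrac{m_j}{4}+c_j & x\in[S_j+\tfrac{3m_j}{16},S_j+\tfrac{m_j}{2})\\ \tfrac{m_j}{4}+c_j & x=S_j+\tfrac{m_j}{2}\\ \tfrac{5m_j}{16}\exp\!\big(\tfrac{-5m_j/16}{x-S_j-m_j/2}+1\big)+\tfrac{m_j}{4}+c_j & x\in(S_j+\tfrac{m_j}{2},S_j+\tfrac{13m_j}{16})\\ -\tfrac{8}{m_j}(x-S_j-\tfrac{7m_j}{8})^2+\tfrac{19m_j}{32}+c_j & x\in[S_j+\tfrac{13m_j}{16},S_j+\tfrac{15m_j}{16})\\ -x+S_j+\tfrac{3m_j}{2}+c_j & x\in[S_j+\tfrac{15m_j}{16},S_{j+1}].\end{cases}$$ Then for each $j\ge0$, the continuous extension of $f_j$ to $[S_j,S_{j+1}]$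 (defined at $S_j$ by $\lim_{x\downarrow S_j}f_j(x)$) is continuous on $[S_j,S_{j+1}]$, is bounded from below by $c_j-3m_j/32$ (so by $-3m_0/32$ when $j=0$), is differentiable on $[S_j,S_{j+1}]$ (with one-sided derivatives at the endpoints) with $\dot f_j(S_j)=\dot f_j(S_{j+1})=-1$, and its derivative is locally Lipschitz continuous.
   Context: $\dot f_j$ denotes the derivative of $f_j$, understood as a one-sided derivative at the endpoints of $[S_j,S_{j+1}]$. *)

From HB Require Import structures.
From mathcomp Require Import all_boot all_order all_algebra.
From mathcomp Require Import all_classical all_reals all_analysis.
Set Implicit Arguments. Unset Strict Implicit. Unset Printing Implicit Defensive.
Import Order.TTheory GRing.Theory Num.Theory.
Import numFieldNormedType.Exports.
Local Open Scope ring_scope.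
Local Open Scope classical_set_scope.

Section Defs.
Variable R : realType.

Definition Sseq (m : nat -> R) (k : nat) : R := \sum_(i < k) m i.

(* The piecewise formula for f_j, given the constant c_j = cj.
   Only its values on (S_j, S_{j+1}] matter; elsewhere it is set to 0. *)
Definition fpiece (m : nat -> R) (j : nat) (cj x : R) : R :=
  let mj := m j in let Sj := Sseq m j in
  if (Sj < x) && (x < Sj + mj / 16) then - x + Sj + cj
  else if (Sj + mj / 16 <= x) && (x < Sj + 3 * mj / 16) then
    8 / mj * (x - Sj - mj / 8) ^+ 2 - 3 * mj / 32 + cj
  else if (Sj + 3 * mj / 16 <= x) && (x < Sj + mj / 2) then
    - (5 * mj / 16) * expR ((5 * mj / 16) / (x - Sj - mj / 2) + 1) + mj / 4 + cj
  else if x == Sj + mj / 2 then mj / 4 + cj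
  else if (Sj + mj / 2 < x) && (x < Sj + 13 * mj / 16) then
    (5 * mj / 16) * expR ((- (5 * mj / 16)) / (x - Sj - mj / 2) + 1) + mj / 4 + cj
  else if (Sj + 13 * mj / 16 <= x) && (x < Sj + 15 * mj / 16) then
    - (8 / mj) * (x - Sj - 7 * mj / 8) ^+ 2 + 19 * mj / 32 + cj
  else if (Sj + 15 * mj / 16 <= x) && (x <= Sseq m j.+1) then
    - x + Sj + 3 * mj / 2 + cj
  else 0.

Fixpoint cseq (m : nat -> R) (j : nat) : R :=
  match j with
  | 0 => 0
  | j'.+1 => fpiece m j' (cseq m j') (Sseq m j'.+1)
  end.

Definition fj (m : nat -> R) (j : nat) (x : R) : R := fpiece m j (cseq m j) x.

Definition fext (m : nat -> R) (j : nat) (x : R) : R :=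
  if x == Sseq m j then lim (fj m j y @[y --> (Sseq m j)^'+]) else fj m j x.

End Defs.

(* After the affine change of variable u = (x - S_j) / m_j, the function
   f_j becomes c_j + m_j * profile u for a single function [profile]
   that does not depend on j.  It is spliced from polynomial pieces and, around
   u = 1/2, from the classical flat function t |-> k e^(1 - k/t) (0 for t <= 0),
   which is differentiable at 0 with derivative 0 because it is O(t^2) there.
   At every splice point the adjacent pieces agree together with their
   derivatives, so [profile] is differentiable on the whole line; its derivative
   is globally Lipschitz since each piece of it is, the second derivative of the
   flat function being bounded through s^n e^(1 - s) <= n! e.  Every claim about
   f_j then follows by rescaling. *)

From HB Require Import structures.
From mathcomp Require Import all_boot all_order all_algebra.
From mathcomp Require Import all_classical all_reals all_analysis.
From mathcomp Require Import ring lra.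
Import Order.TTheory GRing.Theory Num.Theory.
Import numFieldNormedType.Exports.
Local Open Scope classical_set_scope.
Local Open Scope ring_scope.

Section OneSidedDerivatives.
Context {R : realType}.
Implicit Types (f g : R -> R) (x e l : R).

Lemma is_derive1_quotientP f x l :
  is_derive x 1 f l <-> (fun h => h^-1 * (f (x + h) - f x)) @ 0^' --> l.
Proof.
have -> : (fun h : R => h^-1 * (f (x + h) - f x)) =
          (fun h => h^-1 *: ((f \o shift x) (h *: 1) - f x)).
  by apply/funext => h; rewrite /= [h *: 1]mulr1 (addrC h x).
split=> [[_ <-] // | fl]; split; last exact: cvg_lim.
by apply/cvg_ex; exists l.
Qed.

(* The library's [cvg_at_right_left_dnbhs] needs a [metricType] codomain. *)
Lemma cvg_at_left_right_dnbhs f x l :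
  f y @[y --> x^'-] --> l -> f y @[y --> x^'+] --> l -> f y @[y --> x^'] --> l.
Proof.
move=> /cvgrPdist_le fl /cvgrPdist_le fr; apply/cvgrPdist_le => e e0.
have [a /= a0 {}fl] := fl _ e0; have [b /= b0 {}fr] := fr _ e0.
near=> y; have : y != x by near: y; exact: nbhs_dnbhs_neq.
rewrite neq_lt => /orP[yx | xy].
- apply: fl => //=; near: y; exists (a / 2) => /=; first by rewrite divr_gt0.
  move=> z /= + _ => /lt_le_trans; apply.
  by rewrite ler_pdivrMr // ler_pMr // ler1n.
- apply: fr => //=; near: y; exists (b / 2) => /=; first by rewrite divr_gt0.
  move=> z /= + _ => /lt_le_trans; apply.
  by rewrite ler_pdivrMr // ler_pMr // ler1n.
Unshelve. all: by end_near. Qed.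

Lemma is_derive1_cvg_right f g x e l : 0 < e -> {in `[x, x + e[, f =1 g} ->
  is_derive x 1 g l -> (fun h => h^-1 * (f (x + h) - f x)) @ 0^'+ --> l.
Proof.
move=> e0 fg /is_derive1_quotientP/cvg_dnbhs_at_right; apply: cvg_trans.
apply: near_eq_cvg; near=> h.
have h0 : 0 < h by near: h; exact: nbhs_right_gt.
have he : h < e by near: h; exact: nbhs_right_lt.
by rewrite !fg // in_itv /=; apply/andP; split; lra.
Unshelve. all: by end_near. Qed.

Lemma is_derive1_cvg_left f g x e l : 0 < e -> {in `]x - e, x], f =1 g} ->
  is_derive x 1 g l -> (fun h => h^-1 * (f (x + h) - f x)) @ 0^'- --> l.
Proof.
move=> e0 fg /is_derive1_quotientP/cvg_dnbhs_at_left; apply: cvg_trans.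
apply: near_eq_cvg; near=> h.
have h0 : h < 0 by near: h; exact: nbhs_left_lt.
have he : - e < h by near: h; apply: nbhs_left_gt; rewrite ltrNl oppr0.
by rewrite !fg // in_itv /=; apply/andP; split; lra.
Unshelve. all: by end_near. Qed.

Lemma is_derive1_itvoo f g a b x l : x \in `]a, b[ -> {in `]a, b[, f =1 g} ->
  is_derive x 1 g l -> is_derive x 1 f l.
Proof.
move=> xab fg; apply: near_eq_is_derive.
by apply: filterS (near_in_itvoo xab) => y /fg.
Qed.

Lemma is_derive1_quadratic_bound f x C :
  (forall h, `|f (x + h) - f x| <= C * h ^+ 2) -> is_derive x 1 f 0.
Proof.
move=> fC; have C0 : 0 <= C.
  by have := fC 1; rewrite expr1n mulr1; apply: le_trans.
apply/is_derive1_quotientP/cvgr0Pnorm_lt => e e0.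
near=> h.
have h0 : 0 < `|h| by rewrite normr_gt0; near: h; exact: nbhs_dnbhs_neq.
have he : `|h| < e / (C + 1).
  by near: h; apply: dnbhs0_lt; rewrite divr_gt0 // ltr_wpDl.
rewrite normrM normfV mulrC ltr_pdivrMr // (le_lt_trans (fC h)) //.
rewrite ltr_pdivlMr ?ltr_wpDl // in he.
rewrite -real_normK ?num_real //; nra.
Unshelve. all: by end_near. Qed.

End OneSidedDerivatives.

Section Splice.
Context {R : realType}.
Implicit Types (p q dp dq : R -> R) (b L : R).

Definition splice b p q (x : R) : R := if x < b then p x else q x.

Lemma splice_lt b p q x : x < b -> splice b p q x = p x.
Proof. by rewrite /splice => ->. Qed.

Lemma splice_ge b p q x : b <= x -> splice b p q x = q x.
Proof. by rewrite /splice ltNge => ->. Qed.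

Lemma is_derive_splice b p q dp dq :
  (forall x : R, is_derive x 1 p (dp x)) -> (forall x : R, is_derive x 1 q (dq x)) ->
  p b = q b -> dp b = dq b -> forall x : R, is_derive x 1 (splice b p q) (splice b dp dq x).
Proof.
move=> Dp Dq pqb dpqb x.
case: (ltgtP x b) => [xb | bx | ->].
- rewrite /splice xb; apply: (is_derive1_itvoo _ p (x - 1) b) (Dp x).
    by rewrite in_itv /= xb andbT; lra.
  by move=> y; rewrite in_itv /= => /andP[_ ->].
- rewrite /splice ltNge (ltW bx); apply: (is_derive1_itvoo _ q b (x + 1)) (Dq x).
    by rewrite in_itv /= bx; lra.
  by move=> y; rewrite in_itv /= => /andP[/lt_gtF ->].
rewrite [splice b dp dq b]/splice ltxx.
apply/is_derive1_quotientP; apply: cvg_at_left_right_dnbhs.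
- apply: (is_derive1_cvg_left _ p b 1 (dq b)) => //; last by rewrite -dpqb.
  move=> y; rewrite in_itv /= /splice => /andP[_]; rewrite le_eqVlt.
  by case/orP => [/eqP -> | ->]; rewrite ?ltxx.
- apply: (is_derive1_cvg_right _ q b 1 (dq b)) => // y.
  by rewrite in_itv /= /splice => /andP[/le_gtF ->].
Qed.

Lemma cst_lipschitz L c : 0 <= L -> L.-lipschitz (cst c : R -> R).
Proof. by move=> L0 [y z] _; rewrite /= subrr normr0 mulr_ge0. Qed.

Lemma affine_lipschitz L a c : `|a| <= L -> L.-lipschitz (fun u : R => a * (u - c)).
Proof.
move=> aL [y z] _ /=; rewrite -mulrBr opprB addrA subrK normrM.
by rewrite ler_wpM2r.
Qed.

Lemma splice_lipschitz L b p q : p b = q b ->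
  L.-lipschitz p -> L.-lipschitz q -> L.-lipschitz (splice b p q).
Proof.
move=> pqb Lp Lq.
have Lpq y z : y < b -> b <= z -> `|p y - q z| <= L * `|y - z|.
  move=> yb bz; have -> : `|y - z| = `|y - b| + `|b - z| by rewrite !ler0_norm; lra.
  rewrite mulrDr (le_trans (ler_distD (p b) _ _)) // lerD //; first exact: (Lp (y, b)).
  by rewrite pqb; apply: (Lq (b, z)).
move=> [y z] _ /=; rewrite /splice.
case: (ltP y b) => yb; case: (ltP z b) => zb.
- exact: (Lp (y, z)).
- exact: Lpq.
- by rewrite distrC [`|y - z|]distrC; apply: Lpq.
- exact: (Lq (y, z)).
Qed.

End Splice.

Section FlatFunction.
Context {R : realType}.

Lemma exprn_expR1B_le (s : R) n :
  0 <= s -> s ^+ n.+1 * expR (1 - s) <= n.+1`!%:R * expR 1.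
Proof.
move=> s0; have F0 : 0 < n.+1`!%:R :> R by rewrite ltr0n fact_gt0.
have : s ^+ n.+1 <= n.+1`!%:R * expR s.
  rewrite mulrC -ler_pdivrMr //; have := expR_ge1Dxn n s0; lra.
rewrite expRB mulrA ler_pdivrMr ?expR_gt0 // => le_s.
by rewrite mulrAC ler_wpM2r ?expR_ge0.
Qed.

Lemma is_derive_inv {t : R} : t != 0 -> is_derive t 1 (fun y : R => y^-1) (- t ^- 2).
Proof.
move=> t0; apply: is_derive_eq (is_deriveV (f := id) t0 (is_derive_id t 1)) _.
by rewrite /= [_%:A]mulr1.
Qed.

Variable k : R.
Hypothesis k_gt0 : 0 < k.

Definition flat (t : R) : R := if t <= 0 then 0 else k * expR (1 - k / t).

Definition dflat (t : R) : R :=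
  if t <= 0 then 0 else (k / t) ^+ 2 * expR (1 - k / t).

Lemma flat_ge0 (t : R) : 0 <= flat t.
Proof. by rewrite /flat; case: ifP => // _; rewrite mulr_ge0 ?expR_ge0 ?ltW. Qed.

Lemma flat_le (t : R) : t <= k -> flat t <= k.
Proof.
rewrite /flat; case: ifPn => [_ _ | ]; first exact: ltW.
rewrite -ltNge => t0 tk; rewrite ger_pMr // expR_le1 subr_le0.
by rewrite ler_pdivlMr // mul1r.
Qed.

Lemma flat_pos {t : R} : 0 < t -> flat t = k * expR (1 - k / t).
Proof. by rewrite /flat leNgt => ->. Qed.

Lemma flat_eq0 {t : R} : t <= 0 -> flat t = 0.
Proof. by rewrite /flat => ->. Qed.

Lemma dflat_eq0 {t : R} : t <= 0 -> dflat t = 0.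
Proof. by rewrite /dflat => ->. Qed.

Lemma flat_k : flat k = k.
Proof. by rewrite /flat leNgt k_gt0 divff ?gt_eqF // subrr expR0 mulr1. Qed.

Lemma dflat_k : dflat k = 1.
Proof. by rewrite /dflat leNgt k_gt0 divff ?gt_eqF // subrr expR0 expr1n mulr1. Qed.

Lemma flat_le_sq (t : R) : `|flat t| <= 2 * expR 1 / k * t ^+ 2.
Proof.
have C0 : 0 <= 2 * expR 1 / k by rewrite divr_ge0 ?mulr_ge0 ?expR_ge0 ?ltW.
rewrite ger0_norm ?flat_ge0 // /flat; case: ifPn => [_ | ]; first by rewrite mulr_ge0 ?sqr_ge0.
rewrite -ltNge => t0; set s := k / t.
have le_s := exprn_expR1B_le _ 1 (ltW (divr_gt0 k_gt0 t0) : 0 <= s).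
have -> : k * expR (1 - s) = s ^+ 2 * expR (1 - s) * (t ^+ 2 / k).
  by rewrite /s; field; rewrite !gt_eqF.
have -> : 2 * expR 1 / k * t ^+ 2 = 2 * expR 1 * (t ^+ 2 / k) by rewrite mulrAC -mulrA.
apply: ler_wpM2r; first by rewrite divr_ge0 ?sqr_ge0 ?ltW.
by move: le_s; rewrite (_ : 2`!%:R = 2 :> R).
Qed.

Lemma is_derive_expR1B_div {t : R} : t != 0 ->
  is_derive t 1 (fun y => expR (1 - k / y)) (expR (1 - k / t) * (k / t ^+ 2)).
Proof.
move=> t_neq0; have Dinv := is_derive_inv t_neq0.
have Du : is_derive t 1 (fun y => 1 - k / y) (k / t ^+ 2).
  by apply: is_derive_eq; rewrite -?[_ *: _]/(_ * _); field.
exact: is_derive1_comp (is_derive_expR _) Du.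
Qed.

Lemma is_derive_flat_pos {t : R} : 0 < t ->
  is_derive t 1 (fun y => k * expR (1 - k / y)) ((k / t) ^+ 2 * expR (1 - k / t)).
Proof.
move=> t0; have t_neq0 : t != 0 := lt0r_neq0 t0.
have De := is_derive_expR1B_div t_neq0.
by apply: is_derive_eq; rewrite -?[_ *: _]/(_ * _); field.
Qed.

Lemma is_derive_flat (t : R) : is_derive t 1 flat (dflat t).
Proof.
case: (ltgtP t 0) => [t0 | t0 | ->].
- rewrite /dflat (ltW t0); apply: (is_derive1_itvoo _ (cst 0) (t - 1) 0) => //.
    by rewrite in_itv /= t0 andbT; lra.
  by move=> y; rewrite in_itv /= /flat => /andP[_ /ltW ->].
- rewrite /dflat leNgt t0 /=.
  apply: (is_derive1_itvoo _ _ 0 (t + 1)) (is_derive_flat_pos t0).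
    by rewrite in_itv /= t0; lra.
  by move=> y; rewrite in_itv /= /flat leNgt => /andP[->].
rewrite /dflat lexx; apply: (is_derive1_quadratic_bound _ _ (2 * expR 1 / k)) => h.
by rewrite add0r {2}/flat lexx subr0 flat_le_sq.
Qed.


Definition ddflat (t : R) : R := ((k / t) ^+ 4 - 2 * (k / t) ^+ 3) * expR (1 - k / t) / k.

Lemma is_derive_dflat_pos {t : R} : 0 < t -> is_derive t 1 dflat (ddflat t).
Proof.
move=> t0; have t_neq0 : t != 0 := lt0r_neq0 t0.
have Dinv := is_derive_inv t_neq0; have De := is_derive_expR1B_div t_neq0.
apply: (is_derive1_itvoo _ (fun y => (k / y) ^+ 2 * expR (1 - k / y)) 0 (t + 1)).
- by rewrite in_itv /= t0; lra.
- by move=> y; rewrite in_itv /= /dflat leNgt => /andP[->].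
apply: is_derive_eq; rewrite -?[_ *: _]/(_ * _) /ddflat.
by field; rewrite gt_eqF.
Qed.

Lemma dflat_ge0 (t : R) : 0 <= dflat t.
Proof. by rewrite /dflat; case: ifP => // _; rewrite mulr_ge0 ?sqr_ge0 ?expR_ge0. Qed.

Lemma dflat_le {t : R} : 0 < t -> dflat t <= 36 * expR 1 / k * t.
Proof.
move=> t0; rewrite /dflat (leNgt t) t0 /=.
have := exprn_expR1B_le _ 2 (ltW (divr_gt0 k_gt0 t0)).
rewrite (_ : 3`!%:R = 6 :> R) // => le6.
have -> : (k / t) ^+ 2 * expR (1 - k / t) = (k / t) ^+ 3 * expR (1 - k / t) * (t / k).
  by field; rewrite !gt_eqF.
have -> : 36 * expR 1 / k * t = 36 * expR 1 * (t / k) by rewrite mulrAC -mulrA.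
by apply: ler_wpM2r; [rewrite divr_ge0 ?ltW | have := expR_gt0 (1 : R); lra].
Qed.

(* With [s = k / t], [|ddflat t| <= (s^4 + 2 s^3) e^(1 - s) / k <= (4! + 2 * 3!) e / k]. *)
Lemma ddflat_bound {t : R} : 0 < t -> `|ddflat t| <= 36 * expR 1 / k.
Proof.
move=> t0; have s0 : 0 <= k / t by rewrite ltW ?divr_gt0.
have := exprn_expR1B_le _ 3 s0; have := exprn_expR1B_le _ 2 s0.
rewrite (_ : 4`!%:R = 24 :> R) // (_ : 3`!%:R = 6 :> R) // => le6 le24.
have := mulr_ge0 (exprn_ge0 3 s0) (expR_ge0 (1 - k / t)).
have := mulr_ge0 (exprn_ge0 4 s0) (expR_ge0 (1 - k / t)).
rewrite /ddflat normrM normfV (gtr0_norm k_gt0) ler_pM2r ?invr_gt0 // mulrBl -mulrA.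
by rewrite ler_norml => *; apply/andP; split; lra.
Qed.

Lemma dflat_lipschitz : (36 * expR 1 / k).-lipschitz dflat.
Proof.
set L := 36 * expR 1 / k.
have L0 : 0 <= L by rewrite divr_ge0 ?mulr_ge0 ?expR_ge0 ?ltW.
suff Lyz y z : y <= z -> `|dflat y - dflat z| <= L * `|y - z|.
  move=> [y z] _ /=; case: (leP y z) => [/Lyz // | /ltW/Lyz].
  by rewrite distrC [`|y - z|]distrC.
move=> yz; rewrite distrC [`|y - z|]distrC (ger0_norm (_ : 0 <= z - y)) ?subr_ge0 //.
case: (leP z 0) => z0.
  by rewrite /dflat z0 (le_trans yz z0) subrr normr0 mulr_ge0 // subr_ge0.
case: (leP y 0) => y0.
  rewrite {2}/dflat y0 subr0 ger0_norm ?dflat_ge0 // (le_trans (dflat_le z0)) //.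
  by rewrite ler_wpM2l //; lra.
have pos x : x \in `[y, z] -> 0 < x by rewrite in_itv /= => /andP[+ _]; apply: lt_le_trans.
have cont : {within `[y, z], continuous dflat}.
  apply: derivable_within_continuous => x /pos x0.
  by case: (is_derive_dflat_pos x0).
have [c c_in ->] := MVT_segment yz
  (fun x x_in => is_derive_dflat_pos (pos x (subset_itv_oo_cc x_in))) cont.
rewrite normrM (ger0_norm (_ : 0 <= z - y)) ?subr_ge0 //.
by apply: ler_wpM2r; [rewrite subr_ge0 | exact/ddflat_bound/pos].
Qed.

End FlatFunction.

Section Profile.
Context {R : realType}.

Local Notation k := (5 / 16 : R).

Let k_gt0 : 0 < k. Proof. lra. Qed.

Definition profile_middle (u : R) : R := 1 / 4 + flat k (u - 1 / 2) - flat k (1 / 2 - u).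

Definition dprofile_middle (u : R) : R := dflat k (u - 1 / 2) + dflat k (1 / 2 - u).

(* f_j x = c_j + m_j * profile ((x - S_j) / m_j); the two exponential pieces of
   f_j, together with its value at the midpoint, make up [profile_middle]. *)
Definition profile : R -> R :=
  splice (1 / 16) (fun u => - u)
  (splice (3 / 16) (fun u => 8 * (u - 1 / 8) ^+ 2 - 3 / 32)
  (splice (13 / 16) profile_middle
  (splice (15 / 16) (fun u => - 8 * (u - 7 / 8) ^+ 2 + 19 / 32)
  (fun u => - u + 3 / 2)))).

Definition dprofile : R -> R :=
  splice (1 / 16) (cst (-1))
  (splice (3 / 16) (fun u => 16 * (u - 1 / 8))
  (splice (13 / 16) dprofile_middle
  (splice (15 / 16) (fun u => - 16 * (u - 7 / 8))
  (cst (-1))))).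

Lemma profile_middle_ends :
  profile_middle (3 / 16) = - 1 / 16 /\ profile_middle (13 / 16) = 9 / 16.
Proof.
rewrite /profile_middle (_ : 1 / 2 - 3 / 16 = k); last lra.
rewrite (_ : 13 / 16 - 1 / 2 = k); last lra.
rewrite flat_k // !flat_eq0; try lra.
Qed.

Lemma dprofile_middle_ends : dprofile_middle (3 / 16) = 1 /\ dprofile_middle (13 / 16) = 1.
Proof.
rewrite /dprofile_middle (_ : 1 / 2 - 3 / 16 = k); last lra.
rewrite (_ : 13 / 16 - 1 / 2 = k); last lra.
rewrite dflat_k // !dflat_eq0; try lra.
Qed.

Lemma is_derive_profile_middle (u : R) :
  is_derive u 1 profile_middle (dprofile_middle u).
Proof.
have Dl : is_derive u 1 (fun y : R => y - 1 / 2) 1 by apply: is_derive_eq; rewrite subr0.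
have Dr : is_derive u 1 (fun y : R => 1 / 2 - y) (-1).
  by apply: is_derive_eq; rewrite add0r mul1r.
have D1 : is_derive u 1 (fun y => flat k (y - 1 / 2)) (dflat k (u - 1 / 2)).
  by have := is_derive1_comp (is_derive_flat _ k_gt0 _) Dl; rewrite mulr1.
have D2 : is_derive u 1 (fun y => flat k (1 / 2 - y)) (- dflat k (1 / 2 - u)).
  by have := is_derive1_comp (is_derive_flat _ k_gt0 _) Dr; rewrite mulrN1.
rewrite /profile_middle /dprofile_middle; apply: is_derive_eq.
by rewrite add0r mul1r opprK.
Qed.

Lemma is_derive_profile (u : R) : is_derive u 1 profile (dprofile u).
Proof.
have [pm3 pm13] := profile_middle_ends; have [dpm3 dpm13] := dprofile_middle_ends.
have Dquad1 (x : R) :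
    is_derive x 1 (fun u : R => 8 * (u - 1 / 8) ^+ 2 - 3 / 32) (16 * (x - 1 / 8)).
  by apply: is_derive_eq; rewrite -?[_ *: _]/(_ * _); ring.
have Dquad2 (x : R) :
    is_derive x 1 (fun u : R => - 8 * (u - 7 / 8) ^+ 2 + 19 / 32) (- 16 * (x - 7 / 8)).
  by apply: is_derive_eq; rewrite -?[_ *: _]/(_ * _); ring.
have Dmid := is_derive_profile_middle.
(* Typeclass search, which sees the three facts above, proves the derivatives of
   all pieces but the last one. *)
apply: is_derive_splice; [| by rewrite splice_lt /=; [field | lra]..].
apply: is_derive_splice; [| by rewrite splice_lt /= ?pm3 ?dpm3; [field | lra]..].
apply: is_derive_splice; [| by rewrite splice_lt /= ?pm13 ?dpm13; [field | lra]..].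
apply: is_derive_splice; last 2 first; [by rewrite /=; field.. |].
by move=> x; apply: is_derive_eq; rewrite addr0.
Qed.

Lemma dprofile_lipschitz : (2 * (36 * expR 1 / k)).-lipschitz dprofile.
Proof.
set L := 2 * (36 * expR 1 / k).
have L16 : 16 <= L by have := expR_ge1Dx (1 : R); rewrite /L; lra.
have Lcst := cst_lipschitz L (-1) (le_trans (ler0n _ 16) L16).
have Llin (a c : R) : `|a| = 16 -> L.-lipschitz (fun u => a * (u - c)).
  by move=> a16; apply: affine_lipschitz; rewrite a16.
have Lmid : L.-lipschitz dprofile_middle.
  move=> [y z] _ /=; rewrite /dprofile_middle opprD addrACA.
  have := dflat_lipschitz _ k_gt0 (y - 1 / 2, z - 1 / 2) (conj I I).
  have := dflat_lipschitz _ k_gt0 (1 / 2 - y, 1 / 2 - z) (conj I I).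
  rewrite /= (_ : 1 / 2 - y - (1 / 2 - z) = - (y - z)) ?normrN; last by ring.
  rewrite (_ : y - 1 / 2 - (z - 1 / 2) = y - z); last by ring.
  move=> h1 h2; apply: le_trans (ler_normD _ _) _; rewrite /L; lra.
have [dpm3 dpm13] := dprofile_middle_ends.
apply: splice_lipschitz => //; first by rewrite splice_lt /=; [field | lra].
apply: splice_lipschitz;
  [by rewrite splice_lt /= ?dpm3; [field | lra] | by apply: Llin; rewrite normr_nat |].
apply: splice_lipschitz; [by rewrite splice_lt /= ?dpm13; [field | lra] | exact: Lmid |].
by apply: splice_lipschitz; [rewrite /=; field | apply: Llin; rewrite normrN normr_nat |].
Qed.

Lemma dprofile0 : dprofile 0 = -1.
Proof. by rewrite /dprofile splice_lt //; lra. Qed.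

Lemma dprofile1 : dprofile 1 = -1.
Proof. by rewrite /dprofile !splice_ge //; lra. Qed.

Lemma profile_ge {u : R} : 0 <= u <= 1 -> - 3 / 32 <= profile u.
Proof.
move=> /andP[u0 u1]; rewrite /profile.
have [u16 | ?] := ltP u (1 / 16); first by rewrite splice_lt //; lra.
rewrite splice_ge //; have [u3 | ?] := ltP u (3 / 16).
  by rewrite splice_lt //; have := sqr_ge0 (u - 1 / 8); lra.
rewrite splice_ge //; have [u13 | ?] := ltP u (13 / 16).
  rewrite splice_lt // /profile_middle.
  have := flat_ge0 _ k_gt0 (u - 1 / 2); have := flat_le _ k_gt0 (1 / 2 - u).
  lra.
rewrite splice_ge //; have [u15 | ?] := ltP u (15 / 16); last by rewrite splice_ge //; lra.
rewrite splice_lt //; have : 0 <= (u - 13 / 16) * (15 / 16 - u) by rewrite mulr_ge0 //; lra.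
nra.
Qed.

End Profile.

Lemma SseqS {R : realType} (m : nat -> R) j : Sseq m j.+1 = Sseq m j + m j.
Proof. by rewrite /Sseq big_ord_recr. Qed.

Ltac decide_ifs :=
  repeat match goal with |- context [if ?b then _ else _] =>
    let E := fresh in
    first [ have E : b by first [ lra | apply/andP; split; lra | apply/eqP; lra ]
          | have E : b = false by apply/negbTE; first
              [ apply/eqP => ?; lra
              | rewrite negb_and -?leNgt -?ltNge; apply/orP; first [left; lra | right; lra] ] ];
    rewrite E; clear E end.

Ltac field_lra := field; repeat (apply/andP; split); try (apply/eqP => ?; lra).

Lemma fpiece_profile {R : realType} (m : nat -> R) j c x : 0 < m j ->
  Sseq m j < x <= Sseq m j.+1 ->
  fpiece m j c x = c + m j * profile ((x - Sseq m j) / m j).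
Proof.
rewrite /fpiece /profile /= SseqS; set S := Sseq m j; set M := m j => M0 /andP[Sx xSM].
have u_lt a : ((x - S) / M < a) = (x < S + a * M) by rewrite ltr_pdivrMr // ltrBlDl.
have u_le a : ((x - S) / M <= a) = (x <= S + a * M) by rewrite ler_pdivrMr // lerBlDl.
have u_gt a : (a < (x - S) / M) = (S + a * M < x) by rewrite ltr_pdivlMr // ltrBrDl.
have u_ge a : (a <= (x - S) / M) = (S + a * M <= x) by rewrite ler_pdivlMr // lerBrDl.
have [x1 | x1] := ltP x (S + M / 16).
  by rewrite splice_lt ?u_lt; [decide_ifs; field_lra | lra].
rewrite splice_ge ?u_ge; last lra.
have [x3 | x3] := ltP x (S + 3 * M / 16).
  by rewrite splice_lt ?u_lt; [decide_ifs; field_lra | lra].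
rewrite splice_ge ?u_ge; last lra.
have [x13 | x13] := ltP x (S + 13 * M / 16); last first.
  rewrite splice_ge ?u_ge; last lra.
  have [x15 | x15] := ltP x (S + 15 * M / 16).
    by rewrite splice_lt ?u_lt; [decide_ifs; field_lra | lra].
  by rewrite splice_ge ?u_ge; [decide_ifs; field_lra | lra].
rewrite splice_lt ?u_lt /profile_middle; last lra.
have [xh | xh | xh] := ltgtP x (S + M / 2).
- rewrite flat_eq0 ?flat_pos; try by rewrite ?subr_gt0 ?subr_le0 ?u_lt ?u_le; lra.
  rewrite (_ : 1 - 5 / 16 / (1 / 2 - (x - S) / M) = 5 * M / 16 / (x - S - M / 2) + 1).
    by decide_ifs; field.
  by field_lra.
- rewrite flat_pos ?flat_eq0; try by rewrite ?subr_gt0 ?subr_le0 ?u_gt ?u_ge; lra.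
  rewrite (_ : 1 - 5 / 16 / ((x - S) / M - 1 / 2) = - (5 * M / 16) / (x - S - M / 2) + 1).
    by decide_ifs; field.
  by field_lra.
- by rewrite !flat_eq0 ?subr_le0 ?u_le ?u_ge; [decide_ifs; field | lra..].
Qed.



Lemma is_derive_rescale {R : realType} (f : R -> R) (df c s M x : R) : M != 0 ->
  is_derive ((x - s) / M) 1 f df -> is_derive x 1 (fun y => c + M * f ((y - s) / M)) df.
Proof.
move=> M0 Df.
have Dg : is_derive x 1 (fun y : R => (y - s) / M) M^-1.
  by apply: is_derive_eq; rewrite -?[_ *: _]/(_ * _); field.
have Dfg : is_derive x 1 (fun y => f ((y - s) / M)) (df / M).
  by have := is_derive1_comp (g := fun y => (y - s) / M) Df Dg.
by apply: is_derive_eq; rewrite -?[_ *: _]/(_ * _); field.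
Qed.

Section RescaledProfile.
Context {R : realType} (m : nat -> R) (j : nat).

Definition fprofile (x : R) : R := cseq m j + m j * profile ((x - Sseq m j) / m j).

Definition dfprofile (x : R) : R := dprofile ((x - Sseq m j) / m j).

Hypothesis m_gt0 : 0 < m j.

Lemma is_derive_fprofile (x : R) : is_derive x 1 fprofile (dfprofile x).
Proof. exact: is_derive_rescale (lt0r_neq0 m_gt0) (is_derive_profile _). Qed.

Lemma fext_fprofile : {in `[Sseq m j, Sseq m j.+1], fext m j =1 fprofile}.
Proof.
move=> x; rewrite in_itv /= SseqS /fext; set S := Sseq m j => /andP[Sx xSM].
have [->|xS] := eqVneq x S; last first.
  by rewrite /fj fpiece_profile // lt_neqAle eq_sym xS Sx SseqS.
apply: cvg_lim => //; apply: cvg_trans (cvg_at_right_filter _).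
  apply: near_eq_cvg; near=> y.
  have Sy : S < y by near: y; exact: nbhs_right_gt.
  have yM : y < S + m j by near: y; apply: nbhs_right_lt; rewrite ltrDl.
  by rewrite /fj fpiece_profile // Sy SseqS ltW.
by case: (is_derive_fprofile S) => /derivable1_diffP/differentiable_continuous.
Unshelve. all: by end_near. Qed.

Lemma fprofile_ge :
  {in `[Sseq m j, Sseq m j.+1], forall x, cseq m j - 3 * m j / 32 <= fprofile x}.
Proof.
move=> x; rewrite in_itv /= SseqS => /andP[Sx xSM].
have u01 : 0 <= (x - Sseq m j) / m j <= 1.
  apply/andP; split; first by rewrite divr_ge0 ?subr_ge0 // ltW.
  by rewrite ler_pdivrMr // mul1r lerBlDl.
by have := ler_wpM2l (ltW m_gt0) (profile_ge u01); rewrite /fprofile; lra.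
Qed.

Lemma dfprofile_ends : dfprofile (Sseq m j) = -1 /\ dfprofile (Sseq m j.+1) = -1.
Proof.
rewrite /dfprofile SseqS subrr mul0r addrAC subrr add0r divff ?gt_eqF //.
by rewrite dprofile0 dprofile1.
Qed.

Lemma dfprofile_lipschitz : (2 * (36 * expR 1 / (5 / 16)) / m j).-lipschitz dfprofile.
Proof.
move=> [y z] _; have := dprofile_lipschitz ((y - Sseq m j) / m j, (z - Sseq m j) / m j) (conj I I).
rewrite /= (_ : _ / m j - _ / m j = (y - z) / m j); last by field; rewrite gt_eqF.
by rewrite normrM normfV (gtr0_norm m_gt0) mulrA mulrAC.
Qed.

End RescaledProfile.

Local Open Scope classical_set_scope.

Theorem proposition5p2 (R : realType) (m : nat -> R)
  (m_pos : forall k, 0 < m k)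
  (m_div : (fun n => \sum_(k < n) m k) @ \oo --> +oo)
  (m_to0 : m @ \oo --> 0) (j : nat) :
  let a := Sseq m j in let b := Sseq m j.+1 in let g := fext m j in
  [/\ {within `[a, b], continuous g},
      (forall x, x \in `[a, b] -> cseq m j - 3 * m j / 32 <= g x) &
      exists df : R -> R,
        [/\ forall x, x \in `]a, b[ -> is_derive x 1 g (df x),
            (fun h => h^-1 * (g (a + h) - g a)) x @[x --> 0^'+] --> df a,
            (fun h => h^-1 * (g (b + h) - g b)) x @[x --> 0^'-] --> df b,
            df a = -1 /\ df b = -1 &
            forall x, x \in `[a, b] -> exists2 d : R, 0 < d &
              exists L : R, forall y z, y \in `[a, b] -> z \in `[a, b] ->
                `|y - x| < d -> `|z - x| < d ->
                `|df y - df z| <= L * `|y - z| ]].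
Proof.
move=> a b g; have M0 := m_pos j; have ab : b = a + m j by rewrite /b /a SseqS.
have gE := fext_fprofile _ _ M0; have Df := is_derive_fprofile _ _ M0.
have inE' x : x \in `[a, b] -> x \in `[a, b]%R by rewrite inE.
split.
- apply: (@subspace_eq_continuous _ _ _ (fprofile m j)) => [x /inE' /gE // |].
  by apply: derivable_within_continuous => x _; case: (Df x).
- by move=> x /inE' xab; rewrite /g gE // (fprofile_ge _ _ M0).
exists (dfprofile m j); split.
- move=> x; rewrite inE /= => xab; apply: (is_derive1_itvoo _ _ a b) (Df x) => // y.
  by move/subset_itv_oo_cc; apply: gE.
- apply: (is_derive1_cvg_right _ _ a (m j)) (Df a) => // y.
  by rewrite -ab => /subset_itv_co_cc; apply: gE.
- apply: (is_derive1_cvg_left _ _ b (m j)) (Df b) => // y.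
  by rewrite {1}ab addrK => /subset_itv_oc_cc; apply: gE.
- exact: dfprofile_ends.
move=> x _; exists 1 => //; eexists => y z _ _ _ _.
exact: (dfprofile_lipschitz _ _ M0 (y, z)).
Qed.
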